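(* Let $Y(0),Y(1)$ be integrable real potential outcomes and $X$ a random vector in $\mathbb{R}^{d_X}$ with support $\mathcal{X}=\mathcal{X}_0\cup\mathcal{X}_1$, $\mathcal{X}_0\cap\mathcal{X}_1=\emptyset$, with $D=1\{X\in\mathcal{X}_1\}$ and $Y=DY(1)+(1-D)Y(0)$. Suppose $x\mapsto E[Y(d)|X=x]$ is continuous on $\mathcal{X}$ for $d=0,1$, and local comonotonicity holds: for every $x_1\in\mathcal{X}$ there is a neighborhood $N$ of $x_1$ such that for all $x_2\in N\cap\mathcal{X}$, $$E[Y(1)|X=x_1]\geq E[Y(1)|X=x_2]\iff E[Y(0)|X=x_1]\geq E[Y(0)|X=x_2].$$ Let $\mathcal{F}=\mathrm{cl}(\mathrm{int}(\mathcal{X}_1))\cap\mathrm{cl}(\mathrm{int}(\mathcal{X}_0))$ and for $d\in\{0,1\}$ let $g_d$ be a function on $\mathcal{X}_d\cup\mathcal{F}$ with $g_d(x)=E[Y|X=x]$ for $x\in\mathcal{X}_d$ and continuous at each point of $\mathcal{F}$. Suppose that for some $d$ and some $x\in\mathcal{X}_d$ there is a continuous path $p:[0,1]\to\mathcal{X}_d\cup\mathcal{F}$ with $p(0)=x$, $p(1)=x^*\in\mathcal{F}$, and $E[Y|X=p(t)]=E[Y|X=x]$ for all $t\in(0,1)$. Then $E[Y(1)|X=x]=g_1(x^* )$ and $E[Y(0)|X=x]=g_0(x^* )$.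
   Context: Conditional expectation functions are understood as the unique continuous versions; for $z\in\mathcal{X}$, $E[Y|X=z]$ equals $E[Y(d)|X=z]$ when $z\in\mathcal{X}_d$. *)

From HB Require Import structures.
From mathcomp Require Import all_boot all_order all_algebra.
From mathcomp Require Import all_classical all_reals all_analysis.
Set Implicit Arguments. Unset Strict Implicit. Unset Printing Implicit Defensive.
Import Order.TTheory GRing.Theory Num.Theory.
Import numFieldNormedType.Exports.
Local Open Scope classical_set_scope.
Local Open Scope ring_scope.

(* The (continuous version of the) regression function of the observed outcome
   x |-> E[Y | X = x] on the support X = X0 u X1 (X0, X1 disjoint):
   it equals E[Y(1)|X=x] = m1 x on X1 and E[Y(0)|X=x] = m0 x on X0. *)
Definition cefY {R : realType} {n : nat} (X1 : set 'rV[R]_n)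
  (m0 m1 : 'rV[R]_n -> R) (z : 'rV[R]_n) : R :=
  if `[< X1 z >] then m1 z else m0 z.

Definition continuous_at_within {R : realType} {n : nat} (A : set 'rV[R]_n)
  (f : 'rV[R]_n -> R) (a : 'rV[R]_n) : Prop :=
  f @ within A (nbhs a) --> f a.

Definition frontierF {R : realType} {n : nat} (X0 X1 : set 'rV[R]_n) :
  set 'rV[R]_n := closure (interior X1) `&` closure (interior X0).

From HB Require Import structures.
From mathcomp Require Import all_boot all_order all_algebra.
From mathcomp Require Import all_classical all_reals all_analysis.
From mathcomp Require Import lra.
Import Order.TTheory GRing.Theory Num.Theory.
Import numFieldNormedType.Exports.
Local Open Scope classical_set_scope.
Local Open Scope ring_scope.

(* Along the path, a := m1 o p and b := m0 o p are continuous on [0, 1], and at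
   each interior time one of them equals the level c of E[Y|X] on the path.
   Local comonotonicity makes a and b both locally maximal at every interior
   time: if a = c at t and b(t) < c, then b < c near t, so a = c near t and
   comonotonicity transfers a <= a(t) to b; if b(t) >= c, whichever of a, b
   equals c at a nearby time is below its value at t, and comonotonicity
   transfers this to the other one.  A continuous function on [0, 1] that is
   locally maximal at every interior point takes the same value at 0 and 1, so
   m_d(x) = m_d(xs).  Finally g_d(xs) = m_d(xs), since both are continuous at
   xs and agree on X_d, whose closure contains xs. *)

Lemma continuous_within_comp {T U V : topologicalType} {A : set T} {B : set U}
    {p : T -> U} {m : U -> V} :
  {within A, continuous p} -> (forall t, A t -> B (p t)) ->
  {within B, continuous m} -> {within A, continuous (m \o p)}.
Proof.
move=> /subspace_continuousP p_cvg pAB /subspace_continuousP m_cvg.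
apply/subspace_continuousP => t At.
apply: (cvg_comp p m _ (m_cvg _ (pAB _ At))).
move=> P /(p_cvg t At); rewrite !nbhs_simpl /within /=.
by apply: filterS => s BP As; exact: BP As (pAB _ As).
Qed.

Lemma continuous_within_interior {T U : topologicalType} {A : set T}
    {f : T -> U} {t : T} :
  {within A, continuous f} -> A° t -> {for t, continuous f}.
Proof.
move=> /subspace_continuousP f_cvg At.
by have := f_cvg t (interior_subset At); rewrite within_interior.
Qed.

Lemma closure_subset_closed {T : topologicalType} {A B : set T} :
  closed B -> A `<=` B -> closure A `<=` B.
Proof. by move=> B_closed AB; rewrite (closure_id B).1 //; exact: closureS. Qed.

Lemma eq_at_closure {T U : topologicalType} {X A B : set T} {g m : T -> U}
    {z : T} :
  hausdorff_space U -> closed X -> A `<=` X -> A `<=` B -> closure A z ->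
  {in A, g =1 m} -> g @ within B (nbhs z) --> g z ->
  {within X, continuous m} -> g z = m z.
Proof.
move=> hU X_closed AX AB zA gm gz /subspace_continuousP m_cvg.
have Az := within_nbhs_proper zA.
apply: (@cvg_unique _ hU (g @ within A (nbhs z))).
- exact: cvg_trans (cvg_fmap2 (within_subset (nbhs_filter z) AB)) gz.
- apply: cvg_trans (fmap_within_eq _ gm) _.
  apply: cvg_trans (cvg_fmap2 (within_subset (nbhs_filter z) AX)) _.
  exact/m_cvg/(closure_subset_closed X_closed AX).
Qed.

Definition locally_comonotone {R : realType} {T : topologicalType} (X : set T)
    (a b : T -> R) : Prop :=
  forall x1, X x1 -> exists2 N, nbhs x1 N &
    forall x2, N x2 -> X x2 -> (a x2 <= a x1 <-> b x2 <= b x1).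

Lemma comonotone_level_local_max {R : realType} {T : topologicalType}
    {a b : T -> R} {c : R} {t : T} :
  {for t, continuous a} -> {for t, continuous b} ->
  (\forall s \near t, a s <= a t <-> b s <= b t) ->
  (\forall s \near t, a s = c \/ b s = c) ->
  \forall s \near t, a s <= a t /\ b s <= b t.
Proof.
wlog atc : a b / a t = c => [wlog a_cont b_cont comono level|].
  have [atc|btc] := nbhs_singleton level; first exact: wlog.
  have : \forall s \near t, b s <= b t /\ a s <= a t.
    apply: wlog => //; first by apply: filterS comono => s co; split=> /co.
    by apply: filterS level => s [|]; [right|left].
  by apply: filterS => s [].
move=> _ b_cont comono level.
have [btc|ctb] := ltrP (b t) c.
  near=> s; have asc : a s = c.
    have [//|bsc] : a s = c \/ b s = c by near: s.
    have : b s < c by near: s; exact: cvgr_lt _ b_cont _ btc.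
    by rewrite bsc ltxx.
  have co : a s <= a t <-> b s <= b t by near: s.
  have ale : a s <= a t by rewrite asc atc.
  by split=> //; exact/co.
near=> s; have co : a s <= a t <-> b s <= b t by near: s.
have [asc|bsc] : a s = c \/ b s = c by near: s.
  have ale : a s <= a t by rewrite asc atc.
  by split=> //; exact/co.
have ble : b s <= b t by rewrite bsc.
by split=> //; exact/co.
Unshelve. all: by end_near.
Qed.

Section interior_local_max.
Variables (R : realType) (f : R -> R).
Hypothesis f_cont : {within `[0, 1], continuous f}.
Hypothesis f_locmax : forall t : R, 0 < t < 1 -> \forall s \near t, f s <= f t.

(* If f 0 < y < f 1, let r be the last time at which f <= y: then r lies in
   ]0, 1[ and f r <= y, so the local maximality of f at r keeps f <= y just to
   the right of r, contradicting the choice of r. *)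
Lemma interior_local_max_le_start : f 1 <= f 0.
Proof.
rewrite leNgt; apply/negP => f01.
pose y := (f 0 + f 1) / 2.
have [f0y yf1] : f 0 < y /\ y < f 1 by rewrite /y; split; lra.
pose S := [set s : R | s \in `[0, 1] /\ f s <= y].
have S0 : S 0 by split; [rewrite in_itv /= lexx ler01 | exact: ltW].
have supS : has_sup S by split; [exists 0 | exists 1 => s [/[!in_itv] /andP[]]].
set r := sup S.
have S_le_r s : S s -> s <= r by exact: sup_upper_bound.
have r_le1 : r <= 1 by apply: ge_sup; [exists 0 | move=> s [/[!in_itv] /andP[]]].
have r01 : r \in `[0, 1] by rewrite in_itv /= r_le1 (S_le_r _ S0).
have /subspace_continuousP f_cvg := f_cont.
have fr : f r <= y.
  rewrite leNgt; apply/negP => yfr.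
  have := cvgr_gt (FF := within_filter _ (nbhs_filter r)) _ (f_cvg r r01) _ yfr.
  rewrite {1}/within /= => /nbhs_ballP[e e0 near_r].
  have [s Ss rs] := sup_adherent e0 supS; have [s01 fs] := Ss.
  suff : y < f s by lra.
  apply: near_r s01; rewrite -ball_normE /= ger0_norm ?subr_ge0 ?S_le_r //.
  by rewrite ltrBlDr -ltrBlDl.
have [s [s_gt0 Ss]] : exists s, 0 < s /\ S s.
  have near0 := cvgr_lt (FF := within_filter _ (nbhs_filter 0)) _ (f_cvg 0 S0.1) _ f0y.
  apply: (@filter_ex _ (0 : R)^'+); near=> s.
  have s_gt0 : 0 < s by near: s; exact: nbhs_right_gt.
  have s01 : s \in `[0, 1].
    by rewrite in_itv /= ltW //=; near: s; exact: nbhs_right_le.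
  split=> //; split=> //; apply/ltW; move: s01; near: s.
  exact: (@cvg_within _ _ (nbhs_filter 0) _ _ near0).
have r_gt0 : 0 < r by exact: lt_le_trans s_gt0 (S_le_r _ Ss).
have r_lt1 : r < 1.
  by rewrite lt_neqAle r_le1 andbT; apply/eqP => r1; move: fr; rewrite r1; lra.
have [u [ru [u_le1 fu]]] : exists u, r < u /\ u <= 1 /\ f u <= f r.
  apply: (@filter_ex _ r^'+); near=> u; split; [|split].
  - by near: u; exact: nbhs_right_gt.
  - by near: u; exact: nbhs_right_le.
  - by near: u; apply: cvg_within; apply: f_locmax; rewrite r_gt0.
have Su : S u by split; [rewrite in_itv /= u_le1 andbT; lra | lra].
by have := S_le_r _ Su; lra.
Unshelve. all: by end_near.
Qed.

End interior_local_max.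

Lemma interior_local_max_eq_endpoints {R : realType} (f : R -> R) :
  {within `[0, 1], continuous f} ->
  (forall t : R, 0 < t < 1 -> \forall s \near t, f s <= f t) -> f 0 = f 1.
Proof.
move=> f_cont f_locmax.
apply/eqP; rewrite eq_le interior_local_max_le_start // andbT.
pose flip (s : R) := 1 - s.
have flip_cont : continuous flip.
  by move=> s; apply: cvgB; [exact: cvg_cst | exact: cvg_id].
have := @interior_local_max_le_start R (f \o flip).
rewrite /= /flip subrr subr0; apply.
- apply: continuous_within_comp f_cont; first exact: continuous_subspaceT.
  by move=> s /=; rewrite !in_itv /= => /andP[? ?]; apply/andP; split; lra.
- move=> t t01; have flip_t01 : 0 < flip t < 1 by rewrite /flip; lra.
  exact: flip_cont t _ (f_locmax _ flip_t01).
Qed.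

Lemma comonotone_level_path_eq_endpoints {R : realType} {T : topologicalType}
    {X : set T} {m0 m1 : T -> R} {p : R -> T} (c : R) :
  {within X, continuous m0} -> {within X, continuous m1} ->
  locally_comonotone X m1 m0 ->
  {within `[0, 1], continuous p} -> (forall t, [set` `[0, 1]] t -> X (p t)) ->
  (forall t : R, 0 < t < 1 -> m1 (p t) = c \/ m0 (p t) = c) ->
  m1 (p 0) = m1 (p 1) /\ m0 (p 0) = m0 (p 1).
Proof.
move=> m0_cont m1_cont como p_cont pX level.
have local_max (t : R) : 0 < t < 1 ->
    \forall s \near t, m1 (p s) <= m1 (p t) /\ m0 (p s) <= m0 (p t).
  move=> t01; have t_in : t \in `]0, 1[ by rewrite in_itv.
  have near_in01 : \forall s \near t, s \in `]0, 1[ := near_in_itvoo t_in.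
  have t_int : ([set` `[0, 1]] : set R)° t.
    by apply: filterS near_in01; exact: subset_itv_oo_cc.
  have cont (m : T -> R) :
      {within X, continuous m} -> {for t, continuous (m \o p)}.
    move=> m_cont; apply: continuous_within_interior t_int.
    exact: continuous_within_comp p_cont pX m_cont.
  apply: (comonotone_level_local_max (cont _ m1_cont) (cont _ m0_cont)).
    have [N Nt coN] := como (p t) (pX t (interior_subset t_int)).
    have pN : \forall s \near t, N (p s).
      exact: continuous_within_interior p_cont t_int _ Nt.
    near=> s; apply: coN; first by near: s.
    by apply: pX; near: s.
  by apply: filterS near_in01 => s; rewrite in_itv /=; exact: level.
split; [apply: (interior_local_max_eq_endpoints (m1 \o p))
       |apply: (interior_local_max_eq_endpoints (m0 \o p))];
  do ?exact: continuous_within_comp p_cont pX _;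
  by move=> t /local_max; apply: filterS => s [].
Unshelve. all: by end_near.
Qed.

Theorem theoremB2 (R : realType) (dX : nat)
  (X0 X1 : set 'rV[R]_dX)                 (* X = X0 u X1 is the support of X *)
  (m0 m1 : 'rV[R]_dX -> R)                (* m_d x = E[Y(d) | X = x] *)
  (g0 g1 : 'rV[R]_dX -> R)
  (d : bool) (x xs : 'rV[R]_dX) (p : R -> 'rV[R]_dX) :
  closed (X0 `|` X1) ->                    (* a support is closed *)
  X0 `&` X1 = set0 ->
  {within X0 `|` X1, continuous m0} ->
  {within X0 `|` X1, continuous m1} ->
  (* local comonotonicity *)
  (forall x1, (X0 `|` X1) x1 ->
     exists2 N, nbhs x1 N &
       forall x2, N x2 -> (X0 `|` X1) x2 ->
         (m1 x2 <= m1 x1 <-> m0 x2 <= m0 x1)) ->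
  (* g0, g1 *)
  (forall z, X0 z -> g0 z = cefY X1 m0 m1 z) ->
  (forall z, frontierF X0 X1 z ->
     continuous_at_within (X0 `|` frontierF X0 X1) g0 z) ->
  (forall z, X1 z -> g1 z = cefY X1 m0 m1 z) ->
  (forall z, frontierF X0 X1 z ->
     continuous_at_within (X1 `|` frontierF X0 X1) g1 z) ->
  (* the path *)
  (if d then X1 else X0) x ->
  {within `[0, 1], continuous p} ->
  (forall t, [set` `[0, 1]] t -> ((if d then X1 else X0) `|` frontierF X0 X1) (p t)) ->
  p 0 = x -> p 1 = xs -> frontierF X0 X1 xs ->
  (forall t, [set` `]0, 1[] t -> cefY X1 m0 m1 (p t) = cefY X1 m0 m1 x) ->
  m1 x = g1 xs /\ m0 x = g0 xs.
Proof.
move=> X_closed X01 m0_cont m1_cont como g0E g0_cont g1E g1_cont _ p_cont pin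
  p0 p1 [xs1 xs0] level.
set X := X0 `|` X1; set F := frontierF X0 X1.
have FX : F `<=` X.
  move=> z [z1 _]; apply: (closure_subset_closed X_closed (A := X1)).
    by move=> w; right.
  exact: (closureS (@interior_subset _ _)).
have pX t : [set` `[0, 1]] t -> X (p t).
  by move=> /pin [|/FX //]; case: d {pin} => ?; [right|left].
have [m1x m0x] : m1 x = m1 xs /\ m0 x = m0 xs.
  rewrite -p0 -p1; apply: (comonotone_level_path_eq_endpoints (cefY X1 m0 m1 x))
    m0_cont m1_cont como p_cont pX _ => t t01.
  by rewrite -(level t) ?in_itv // /cefY; case: asboolP; [left|right].
split; [rewrite m1x | rewrite m0x]; symmetry.
- apply: (eq_at_closure (@Rhausdorff R) X_closed (A := X1) (B := X1 `|` F)) => //.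
  + exact: (closureS (@interior_subset _ _)).
  + by move=> w /[!inE] w1; rewrite g1E // /cefY asboolT.
  + exact/g1_cont.
- apply: (eq_at_closure (@Rhausdorff R) X_closed (A := X0) (B := X0 `|` F)) => //.
  + exact: (closureS (@interior_subset _ _)).
  + move=> w /[!inE] w0; rewrite g0E // /cefY asboolF // => w1.
    by rewrite -[False]/(set0 w) -X01.
  + exact/g0_cont.
Qed.
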